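(* Let $e\geqslant 1$ be an integer and $b\geqslant 2$ an even integer, and let $D_{e,b}$ be the cycle set for $T_{e,b}$. Assume there exists a positive integer $h$ such that $h+x$ is $(e,b)$-happy for every $x\in D_{e,b}$. Then for every positive integer $m$ there exists a positive integer $l$ such that $l+1,l+2,\ldots,l+m$ are all $(e,b)$-happy.
   Context: For a positive integer $n=\sum_{j=0}^k a_j b^j$ with $0\leqslant a_j<b$, $T_{e,b}(n)=\sum_{j=0}^k a_j^e$; $T_{e,b}^r$ is the $r$-th iterate, $T_{e,b}^0(n)=n$. A positive integer $n$ is $(e,b)$-happy if $T_{e,b}^r(n)=1$ for some $r\geqslant 0$. A set $D_{e,b}$ of positive integers is a cycle set for $T_{e,b}$ if (1) for every positive integer $n$ there is $r\geqslant 0$ with $T_{e,b}^r(n)\in D_{e,b}$; (2) $T_{e,b}(x)\in D_{e,b}$ for all $x\in D_{e,b}$; (3) for every $x\in D_{e,b}$ there is $r\geqslant 1$ with $T_{e,b}^r(x)=x$. Such a set is finite and uniquely determined by $e,b$ (it is the set of positive integers $x$ with $T_{e,b}^r(x)=x$ for some $r\geqslant1$). *)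

From mathcomp Require Import all_boot.
Set Implicit Arguments. Unset Strict Implicit. Unset Printing Implicit Defensive.

(* Base-b digits of n, least significant first (empty for n = 0).
   Fuel n suffices since each step divides by b >= 2. *)
Fixpoint digits_aux (fuel b n : nat) : seq nat :=
  match fuel with
  | 0 => [::]
  | fuel'.+1 => if n == 0 then [::] else (n %% b) :: digits_aux fuel' b (n %/ b)
  end.

Definition digits (b n : nat) : seq nat := digits_aux n b n.

Definition T (e b n : nat) : nat := \sum_(d <- digits b n) d ^ e.

Definition happy (e b n : nat) : Prop := 0 < n /\ exists r, iter r (T e b) n = 1.

Definition cycle_set (e b : nat) : nat -> Prop :=
  fun x => 0 < x /\ exists r, 0 < r /\ iter r (T e b) x = x.

Definition is_cycle_set (e b : nat) (D : nat -> Prop) : Prop :=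
  [/\ (forall n, 0 < n -> exists r, D (iter r (T e b) n)),
      (forall x, D x -> D (T e b x)) &
      (forall x, D x -> exists r, 0 < r /\ iter r (T e b) x = x)].

From Pilot Require Import Defs.
From mathcomp Require Import all_boot zify.

Set Implicit Arguments.
Unset Strict Implicit.

(* Since T n <= n/2 + O(1), every orbit of T is bounded, hence eventually
   periodic; so some iterate T^R sends each of 1, ..., m into the cycle set.
   Digit concatenation makes T additive, T(A b^K + s) = T A + T s for s < b^K,
   and the base-b repunit with a digits has T-value a.  Prefixing such a block
   to every s of a finite set S therefore adds a to T s; iterating this R
   times backwards yields l with T^R(l + i) = h + T^R(i) for 1 <= i <= m, and
   h + T^R(i) is happy by hypothesis. *)

Section DigitPowerSum.

Variables e b : nat.
Hypothesis e_gt0 : 0 < e.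
Hypothesis b_gt1 : 1 < b.

Let T := T e b.

Lemma digits_aux_fuel f1 f2 n : n <= f1 -> n <= f2 ->
  digits_aux f1 b n = digits_aux f2 b n.
Proof.
elim: f1 f2 n => [|f1 IH] [|f2] n h1 h2 /=; [by [] | by have -> : n = 0 by lia.. |].
case: eqP => // /eqP n_neq0; congr (_ :: _).
have div_lt : n %/ b < n by rewrite ltn_Pdiv //; lia.
by apply: IH; lia.
Qed.

Lemma T0 : T 0 = 0.
Proof. by rewrite /T /Defs.T /digits /= big_nil. Qed.

Lemma T_rec n : T n = (n %% b) ^ e + T (n %/ b).
Proof.
case: n => [|n]; first by rewrite mod0n div0n exp0n // T0.
rewrite /T /Defs.T /digits /= big_cons; congr (_ + _).
have div_lt : n.+1 %/ b < n.+1 by rewrite ltn_Pdiv //; lia.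
by rewrite (@digits_aux_fuel n (n.+1 %/ b)) //; lia.
Qed.

Lemma T_concat A K s : s < b ^ K -> T (A * b ^ K + s) = T A + T s.
Proof.
elim: K s => [|K IH] s s_lt.
  have -> : s = 0 by rewrite expn0 in s_lt; lia.
  by rewrite expn0 muln1 addn0 T0 addn0.
rewrite T_rec [T s]T_rec expnS mulnCA mulnC modnMDl divnMDl; last lia.
rewrite IH; first lia.
by rewrite ltn_divLR ?(ltnW b_gt1) // -expnSr.
Qed.

Fixpoint repunit a := if a is a'.+1 then repunit a' * b + 1 else 0.

Lemma T_repunit a : T (repunit a) = a.
Proof.
elim: a => [|a IH] /=; first exact: T0.
rewrite T_rec modnMDl divnMDl; last lia.
by rewrite modn_small // divn_small // addn0 IH exp1n; lia.
Qed.

Lemma repunit_gt0 a : 0 < a -> 0 < repunit a.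
Proof. by case: a => //= a _; lia. Qed.

Lemma T_gt0 n : 0 < n -> 0 < T n.
Proof.
elim/ltn_ind: n => n IH n_gt0; rewrite T_rec.
have [mod0 | mod_gt0] := posnP (n %% b); last first.
  by rewrite addn_gt0 expn_gt0 mod_gt0.
rewrite mod0 exp0n // add0n; apply: IH; first by rewrite ltn_Pdiv //; lia.
have := divn_eq n b; rewrite mod0 addn0.
by case: (posnP (n %/ b)) => [->|]; lia.
Qed.

Lemma iter_T_gt0 r n : 0 < n -> 0 < iter r T n.
Proof. by move=> n_gt0; elim: r => //= r; exact: T_gt0. Qed.

(* K is the maximum of T below 4(b-1)^e + 4; above that bound the last digit
   contributes at most (b-1)^e, which the extra halving n/b <= n/2 absorbs. *)
Lemma T_le_half : exists K, forall n, T n <= n %/ 2 + K.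
Proof.
set c := (b - 1) ^ e; set N := 4 * c + 4.
exists (\max_(i < N) T i); elim/ltn_ind => n IH.
have [n_lt | n_ge] := ltnP n N.
  by have := @leq_bigmax _ (fun i : 'I_N => T i) (Ordinal n_lt) => /= ?; lia.
have digit_le : (n %% b) ^ e <= c.
  by rewrite leq_exp2r //; have := ltn_pmod n (ltnW b_gt1); lia.
have div_lt : n %/ b < n by rewrite ltn_Pdiv //; lia.
have div_le : n %/ b <= n %/ 2 by apply: leq_div2l.
by rewrite T_rec; have := IH _ div_lt; lia.
Qed.

Lemma iter_T_bounded n : exists B, forall r, iter r T n <= B.
Proof.
have [K HK] := T_le_half.
exists (maxn n (2 * K)); elim=> [|r IH] /=; first exact: leq_maxl.
by have := HK (iter r T n); lia.
Qed.

Lemma iter_T_eventually_periodic n :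
  exists i p, 0 < p /\ iter (i + p) T n = iter i T n.
Proof.
have [B HB] := iter_T_bounded n.
set orbit := [seq iter i T n | i <- iota 0 B.+2].
have : ~~ uniq orbit.
  apply/negP => orbit_uniq.
  have : size orbit <= size (iota 0 B.+1).
    by apply: uniq_leq_size => // x /mapP [i _ ->]; rewrite mem_iota add0n ltnS HB.
  by rewrite size_map !size_iota ltnn.
case/(uniqPn 0) => [i [j [lt_ij]]].
rewrite size_map size_iota => j_lt.
rewrite !(nth_map 0) ?size_iota ?nth_iota ?add0n; try lia.
move=> orbit_ij; exists i, (j - i); split; first lia.
by rewrite subnKC ?orbit_ij //; lia.
Qed.

Lemma iter_T_eventually_cycle n : 0 < n ->
  exists R, forall r, R <= r -> cycle_set e b (iter r T n).
Proof.
move=> n_gt0; have [i [p [p_gt0 periodic]]] := iter_T_eventually_periodic n.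
exists i => r le_ir; split; first exact: iter_T_gt0.
exists p; split => //.
rewrite -iterD (_ : p + r = (r - i) + (i + p)); last by lia.
by rewrite iterD periodic -iterD subnK.
Qed.

Lemma iter_T_common_cycle (S : seq nat) : {in S, forall n, 0 < n} ->
  exists R, {in S, forall n, cycle_set e b (iter R T n)}.
Proof.
move=> S_gt0.
suff [R HR] : exists R, {in S, forall n r, R <= r -> cycle_set e b (iter r T n)}.
  by exists R => n n_in; exact: HR.
elim: S S_gt0 => [|n S IH] S_gt0; first by exists 0.
have [R HR] := IH (fun s s_in => S_gt0 s (@mem_behead _ (n :: S) s s_in)).
have [Rn HRn] := iter_T_eventually_cycle (S_gt0 n (mem_head n S)).
exists (maxn R Rn) => s; rewrite inE => /predU1P [-> | s_in] r le_r.
  by apply: HRn; lia.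
by apply: HR => //; lia.
Qed.

Lemma iter_T_shift r (S : seq nat) c : 0 < c ->
  exists a, 0 < a /\ {in S, forall s, iter r T (a + s) = c + iter r T s}.
Proof.
elim: r S => [|r IH] S c_gt0; first by exists c.
have [a' [a'_gt0 Ha']] := IH [seq T s | s <- S] c_gt0.
pose M := \max_(s <- S) s.
exists (repunit a' * b ^ M); split.
  by rewrite muln_gt0 repunit_gt0 // expn_gt0; lia.
move=> s s_in; rewrite !iterSr T_concat ?T_repunit; first exact/Ha'/map_f.
have s_le : s <= M := leq_bigmax_seq s s_in isT.
by apply: leq_ltn_trans s_le _; apply: ltn_expl.
Qed.

End DigitPowerSum.

Theorem corollary2p1 (e b : nat) (he : 1 <= e) (hb : 2 <= b) (hbeven : ~~ odd b) :
  (exists h, 0 < h /\ forall x, cycle_set e b x -> happy e b (h + x)) ->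
  forall m, 0 < m -> exists l, 0 < l /\ forall i, 1 <= i <= m -> happy e b (l + i).
Proof.
move=> [h [h_gt0 h_happy]] m _.
have range_gt0 : {in iota 1 m, forall i, 0 < i} by move=> i; rewrite mem_iota; lia.
have [R HR] := iter_T_common_cycle he hb range_gt0.
have [l [l_gt0 Hl]] := iter_T_shift he hb R (iota 1 m) h_gt0.
exists l; split => // i i_range.
have i_in : i \in iota 1 m by rewrite mem_iota; lia.
have [_ [r Hr]] := h_happy _ (HR _ i_in).
split; first lia.
by exists (r + R); rewrite iterD Hl.
Qed.
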